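(* Let $\theta>0$, and for $n\in\mathbb{N}$ let $J_n\subset\{1,\dots,n\}$ be arbitrary. Define for $l\ge1$ \[ \upsilon_n(l):=\theta^l\sum_{\substack{j_1,\dots,j_l\in J_n\\ j_1+\cdots+j_l<n}}\frac{1}{j_1\cdots j_l}\Big(1-\frac{j_1+\cdots+j_l}{n}\Big)^{\theta-1}. \] If $\theta\ge1$, then $\upsilon_n(l)\le\upsilon_n(1)^l$ for all $n,l\in\mathbb{N}$. If $\theta<1$, then there is a constant $C>0$ depending only on $\theta$ such that $\upsilon_n(l)\le C^l(\upsilon_n(1)+1)^l$ for all $n,l\in\mathbb{N}$. *)

From Stdlib Require Import Reals List.
Import ListNotations.
Open Scope R_scope.

Fixpoint tuples (s : list nat) (l : nat) : list (list nat) :=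
  match l with
  | O => [nil]
  | S k => flat_map (fun j => map (fun t => j :: t) (tuples s k)) s
  end.

Definition sumn (t : list nat) : nat := fold_right Nat.add 0%nat t.

(* The elements of J_n, as a subset of {1,...,n} given by a boolean predicate
   J : nat -> nat -> bool (J n j means j ∈ J_n); only j in {1..n} are used. *)
Definition Jlist (J : nat -> nat -> bool) (n : nat) : list nat :=
  filter (J n) (seq 1 n).

Definition term (theta : R) (n : nat) (t : list nat) : R :=
  if Nat.ltb (sumn t) n then
    / INR (fold_right Nat.mul 1%nat t) *
    Rpower (1 - INR (sumn t) / INR n) (theta - 1)
  else 0.

Definition upsilon (theta : R) (J : nat -> nat -> bool) (n l : nat) : R :=
  theta ^ l * fold_right Rplus 0 (map (term theta n) (tuples (Jlist J n) l)).

(* Write upsilon_n(l) = F_l(0), where F_l(r) is the same sum with every partial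
   sum j_1 + ... + j_l shifted by r.  Then F_0(r) = w(r) := (1 - r/n)^(theta-1)
   (w(r) = 0 for r >= n) and F_(l+1)(r) = sum_(j in J_n) theta/j F_l(r+j), so a
   one-step bound  sum_j theta/j w(r+j) <= D w(r)  for all r gives, by induction
   on l, F_l(r) <= D^l w(r) and hence upsilon_n(l) <= D^l.

   For theta >= 1, 1 - (r+j)/n <= (1 - r/n)(1 - j/n) gives w(r+j) <= w(j) w(r),
   so D = upsilon_n(1) works.  For theta < 1, put m = n - r, so that
   w(r+j) = ((m-j)/m)^(theta-1) w(r).  If 2j <= m this factor is at most
   2 <= 2 w(j).  Otherwise theta/j <= 2 theta/m, and by the mean value theorem
   (theta/m) ((m-j)/m)^(theta-1) is at most the decrement
   ((m-j)/m)^theta - ((m-j-1)/m)^theta, whose sum over j telescopes to at most 1.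
   Hence D = 2 (upsilon_n(1) + 1) works, i.e. C = 2. *)

From Stdlib Require Import Reals Lra Lia List.
Open Scope R_scope.

Notation lsum f s := (fold_right Rplus 0 (map f s)).

Section ListSums.

Context {A : Type}.
Implicit Types (f g : A -> R) (s : list A).

Lemma lsum_le f g s : (forall x, In x s -> f x <= g x) -> lsum f s <= lsum g s.
Proof.
  induction s as [|a s IH]; simpl; intros H; [lra|].
  apply Rplus_le_compat; [apply H | apply IH]; auto.
Qed.

Lemma lsum_ext f g s : (forall x, In x s -> f x = g x) -> lsum f s = lsum g s.
Proof. induction s as [|a s IH]; simpl; intros H; [|rewrite H, IH]; auto. Qed.

Lemma lsum0 s : lsum (fun _ => 0) s = 0.
Proof. induction s as [|a s IH]; simpl; lra. Qed.

Lemma lsum_ge0 f s : (forall x, In x s -> 0 <= f x) -> 0 <= lsum f s.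
Proof.
  intros H; apply Rle_trans with (lsum (fun _ => 0) s); [rewrite lsum0; lra|].
  apply lsum_le; auto.
Qed.

Lemma lsumD f g s : lsum (fun x => f x + g x) s = lsum f s + lsum g s.
Proof. induction s as [|a s IH]; simpl; [|rewrite IH]; ring. Qed.

Lemma lsumZ c f s : lsum (fun x => c * f x) s = c * lsum f s.
Proof. induction s as [|a s IH]; simpl; [|rewrite IH]; ring. Qed.

Lemma lsum_filter_le (p : A -> bool) f s :
  (forall x, In x s -> 0 <= f x) -> lsum f (filter p s) <= lsum f s.
Proof.
  induction s as [|a s IH]; simpl; intros H; [lra|].
  assert (0 <= f a) by auto.
  assert (lsum f (filter p s) <= lsum f s) by auto.
  destruct (p a); simpl; lra.
Qed.

Lemma lsum_flat_map {B} (h : A -> list B) (f : B -> R) s :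
  lsum f (flat_map h s) = lsum (fun x => lsum f (h x)) s.
Proof.
  induction s as [|a s IH]; simpl; [reflexivity|].
  rewrite map_app, fold_right_app, <- IH.
  induction (h a) as [|b t IHt]; simpl; [|rewrite IHt]; ring.
Qed.

End ListSums.

Lemma lsum_telescope (V : nat -> R) a N :
  lsum (fun j => V j - V (S j)) (seq a N) = V a - V (a + N)%nat.
Proof.
  revert a; induction N as [|N IH]; intros a; simpl.
  - rewrite Nat.add_0_r; ring.
  - rewrite IH, <- plus_n_Sm; simpl; ring.
Qed.
Lemma Rpower_1_l e : Rpower 1 e = 1.
Proof. unfold Rpower; rewrite ln_1, Rmult_0_r; apply exp_0. Qed.

Lemma Rpower_le_antitone e x y : e <= 0 -> 0 < x <= y -> Rpower y e <= Rpower x e.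
Proof.
  intros He Hxy.
  replace e with (- - e) by ring; rewrite (Rpower_Ropp x), (Rpower_Ropp y).
  apply Rinv_le_contravar; [apply exp_pos|].
  apply Rle_Rpower_l; lra.
Qed.

Lemma Rpower_le_1 e x : 0 <= e -> 0 < x <= 1 -> Rpower x e <= 1.
Proof. intros; rewrite <- (Rpower_1_l e); apply Rle_Rpower_l; auto. Qed.

Lemma Rpower_ge_1 e x : e <= 0 -> 0 < x <= 1 -> 1 <= Rpower x e.
Proof. intros; rewrite <- (Rpower_1_l e); apply Rpower_le_antitone; auto. Qed.

Lemma Rpower_half_le_2 e : -1 <= e <= 0 -> Rpower (/ 2) e <= 2.
Proof.
  intros He.
  replace (Rpower (/ 2) e) with (Rpower 2 (- e)).
  - rewrite <- (Rpower_1 2) at 2 by lra; apply Rle_Rpower; lra.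
  - unfold Rpower; rewrite ln_Rinv by lra; f_equal; ring.
Qed.

Lemma one_sub_ratio_pos a n : (a < n)%nat -> 0 < 1 - INR a / INR n.
Proof.
  intros H; apply lt_INR in H.
  assert (0 <= INR a) by apply pos_INR.
  assert (INR a / INR n < 1); [|lra].
  apply Rmult_lt_reg_r with (INR n); [lra|].
  unfold Rdiv; rewrite Rmult_assoc, Rinv_l; lra.
Qed.

Lemma INR_ratio_ge0 a n : (0 < n)%nat -> 0 <= INR a / INR n.
Proof.
  intros H; apply lt_0_INR in H.
  apply Rmult_le_pos; [apply pos_INR | left; apply Rinv_0_lt_compat; auto].
Qed.

(* Rpower 0 e is 1 in Rocq, so the vanishing of w outside [0, n) must be explicit. *)
Definition weight (theta : R) (n r : nat) : R :=
  if Nat.ltb r n then Rpower (1 - INR r / INR n) (theta - 1) else 0.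

Definition shifted_term (theta : R) (n r : nat) (t : list nat) : R :=
  / INR (fold_right Nat.mul 1%nat t) * weight theta n (r + sumn t).

Definition upsilon_from (theta : R) (n : nat) (s : list nat) (l r : nat) : R :=
  theta ^ l * lsum (shifted_term theta n r) (tuples s l).

Lemma weight_ge0 theta n r : 0 <= weight theta n r.
Proof. unfold weight; destruct (Nat.ltb r n); [left; apply exp_pos | lra]. Qed.

Lemma weight_out theta n r : (n <= r)%nat -> weight theta n r = 0.
Proof. intros H; unfold weight; case (Nat.ltb_spec r n); [lia | auto]. Qed.

Lemma weight0 theta n : (1 <= n)%nat -> weight theta n 0 = 1.
Proof.
  intros Hn; unfold weight; case (Nat.ltb_spec 0 n); [intros _ | lia].
  unfold Rdiv; rewrite Rmult_0_l, Rminus_0_r; apply Rpower_1_l.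
Qed.

Lemma upsilon_from0 theta n s r : upsilon_from theta n s 0 r = weight theta n r.
Proof. unfold upsilon_from, shifted_term; simpl; rewrite Nat.add_0_r, Rinv_1; ring. Qed.

Lemma upsilon_fromS theta n s l r :
  upsilon_from theta n s (S l) r =
  lsum (fun j => theta / INR j * upsilon_from theta n s l (r + j)) s.
Proof.
  unfold upsilon_from; simpl tuples; rewrite lsum_flat_map.
  rewrite <- lsumZ; apply lsum_ext; intros j _.
  rewrite map_map.
  replace (theta / INR j * (theta ^ l * lsum (shifted_term theta n (r + j)) (tuples s l)))
    with (theta ^ S l * (/ INR j * lsum (shifted_term theta n (r + j)) (tuples s l)))
    by (simpl; unfold Rdiv; ring).
  f_equal; rewrite <- lsumZ; apply lsum_ext; intros t _.
  unfold shifted_term; simpl; rewrite mult_INR, Rinv_mult, Nat.add_assoc; ring.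
Qed.

Lemma upsilon_from_le_pow theta n s D :
  0 < theta -> 0 <= D -> (forall j, In j s -> (1 <= j)%nat) ->
  (forall r, lsum (fun j => theta / INR j * weight theta n (r + j)) s <= D * weight theta n r) ->
  forall l r, upsilon_from theta n s l r <= D ^ l * weight theta n r.
Proof.
  intros Htheta HD Hs Hstep; induction l as [|l IH]; intros r.
  - rewrite upsilon_from0; simpl; lra.
  - rewrite upsilon_fromS.
    apply Rle_trans with (lsum (fun j => D ^ l * (theta / INR j * weight theta n (r + j))) s).
    + apply lsum_le; intros j Hj.
      assert (0 < INR j) by (apply lt_0_INR; specialize (Hs j Hj); lia).
      rewrite (Rmult_comm (D ^ l)), Rmult_assoc.
      apply Rmult_le_compat_l; [left; apply Rdiv_lt_0_compat; lra |].
      rewrite Rmult_comm; apply IH.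
    + rewrite lsumZ.
      replace (D ^ S l * weight theta n r) with (D ^ l * (D * weight theta n r)) by (simpl; ring).
      apply Rmult_le_compat_l; [apply pow_le; auto | apply Hstep].
Qed.

Lemma Jlist_bounds J n j : In j (Jlist J n) -> (1 <= j <= n)%nat.
Proof. unfold Jlist; rewrite filter_In, in_seq; lia. Qed.

Lemma upsilon_from_Jlist theta J n l :
  upsilon theta J n l = upsilon_from theta n (Jlist J n) l 0.
Proof.
  unfold upsilon, upsilon_from; f_equal; apply lsum_ext; intros t _.
  unfold term, shifted_term, weight; simpl.
  destruct (Nat.ltb (sumn t) n); ring.
Qed.

Lemma upsilon1 theta J n :
  upsilon theta J n 1 = lsum (fun j => theta / INR j * weight theta n j) (Jlist J n).
Proof.
  rewrite upsilon_from_Jlist, upsilon_fromS; apply lsum_ext; intros j _.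
  rewrite upsilon_from0; reflexivity.
Qed.

Lemma upsilon1_ge0 theta J n : 0 < theta -> 0 <= upsilon theta J n 1.
Proof.
  intros Htheta; rewrite upsilon1; apply lsum_ge0; intros j Hj.
  apply Jlist_bounds in Hj.
  assert (0 < INR j) by (apply lt_0_INR; lia).
  apply Rmult_le_pos; [left; apply Rdiv_lt_0_compat; lra | apply weight_ge0].
Qed.

Lemma upsilon_le_pow theta J n l D :
  0 < theta -> (1 <= n)%nat -> 0 <= D ->
  (forall r, lsum (fun j => theta / INR j * weight theta n (r + j)) (Jlist J n)
               <= D * weight theta n r) ->
  upsilon theta J n l <= D ^ l.
Proof.
  intros Htheta Hn HD Hstep.
  rewrite upsilon_from_Jlist, <- (Rmult_1_r (D ^ l)), <- (weight0 theta n Hn).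
  apply upsilon_from_le_pow; auto.
  intros j Hj; apply Jlist_bounds in Hj; lia.
Qed.

Lemma weight_add_le theta n r j :
  1 <= theta -> weight theta n (r + j) <= weight theta n j * weight theta n r.
Proof.
  intros Htheta.
  destruct (Nat.lt_ge_cases (r + j) n) as [Hrj | Hrj];
    [| rewrite weight_out by auto; apply Rmult_le_pos; apply weight_ge0].
  unfold weight.
  case (Nat.ltb_spec (r + j) n); case (Nat.ltb_spec j n); case (Nat.ltb_spec r n); try lia.
  intros Hr Hj _.
  rewrite Rpower_mult_distr by (apply one_sub_ratio_pos; auto).
  apply Rle_Rpower_l; [lra | split; [apply one_sub_ratio_pos; auto |]].
  assert (0 <= INR r / INR n * (INR j / INR n)).
  { apply Rmult_le_pos; apply INR_ratio_ge0; lia. }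
  rewrite plus_INR; unfold Rdiv in *; nra.
Qed.

Lemma upsilon_le_upsilon1_pow theta J n l :
  1 <= theta -> (1 <= n)%nat -> upsilon theta J n l <= upsilon theta J n 1 ^ l.
Proof.
  intros Htheta Hn.
  apply upsilon_le_pow; auto; [lra | apply upsilon1_ge0; lra |].
  intros r; rewrite upsilon1, Rmult_comm, <- lsumZ.
  apply lsum_le; intros j Hj; apply Jlist_bounds in Hj.
  assert (0 < INR j) by (apply lt_0_INR; lia).
  rewrite (Rmult_comm (weight theta n r)), Rmult_assoc.
  apply Rmult_le_compat_l; [left; apply Rdiv_lt_0_compat; lra |].
  apply weight_add_le; auto.
Qed.

(* As for weight, the case j >= m is explicit because Rpower 0 theta = 1. *)
Definition tail_pow (theta : R) (m j : nat) : R :=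
  if Nat.ltb j m then Rpower (INR (m - j) / INR m) theta else 0.

Section SmallTheta.

Variable theta : R.
Hypothesis Htheta : 0 < theta < 1.

Lemma weight_ge1 n j : (j < n)%nat -> 1 <= weight theta n j.
Proof.
  intros Hj; unfold weight; case (Nat.ltb_spec j n); [intros _ | lia].
  apply Rpower_ge_1; [lra |]; split; [apply one_sub_ratio_pos; auto |].
  pose proof (INR_ratio_ge0 j n ltac:(lia)); lra.
Qed.

Lemma weight_shift n r j : (r + j < n)%nat ->
  weight theta n (r + j) =
  Rpower (INR (n - r - j) / INR (n - r)) (theta - 1) * weight theta n r.
Proof.
  intros Hrj; unfold weight.
  case (Nat.ltb_spec (r + j) n); case (Nat.ltb_spec r n); try lia; intros Hr _.
  assert (0 < INR (n - r - j)) by (apply lt_0_INR; lia).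
  assert (0 < INR (n - r)) by (apply lt_0_INR; lia).
  rewrite Rpower_mult_distr by (try apply Rdiv_lt_0_compat; try apply one_sub_ratio_pos; auto).
  pose proof (pos_INR r).
  f_equal; rewrite !minus_INR, plus_INR in * by lia.
  field; split; lra.
Qed.

Lemma tail_pow_decrement m j : (j < m)%nat ->
  theta / INR m * Rpower (INR (m - j) / INR m) (theta - 1)
    <= tail_pow theta m j - tail_pow theta m (S j).
Proof.
  intros Hj; unfold tail_pow.
  assert (Hm : 0 < INR m) by (apply lt_0_INR; lia).
  set (x := INR (m - j) / INR m).
  case (Nat.ltb_spec j m); [intros _ | lia].
  case (Nat.ltb_spec (S j) m); intros Hsj.
  - (* mean value theorem on [x - 1/m, x], using that y^(theta-1) decreases *)
    set (x' := INR (m - S j) / INR m).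
    assert (Hx' : 0 < x') by (apply Rdiv_lt_0_compat; [apply lt_0_INR; lia | auto]).
    assert (Hxx' : x - x' = / INR m).
    { unfold x, x'; rewrite !minus_INR, S_INR by lia; field; lra. }
    assert (0 < / INR m) by (apply Rinv_0_lt_compat; auto).
    destruct (MVT_cor2 (fun y => Rpower y theta) (fun y => theta * Rpower y (theta - 1)) x' x)
      as [c [Hmvt Hc]]; [lra | intros c Hc; apply derivable_pt_lim_power; lra |].
    rewrite Hmvt, Hxx'.
    replace (theta * Rpower c (theta - 1) * / INR m) with (theta / INR m * Rpower c (theta - 1))
      by (unfold Rdiv; ring).
    apply Rmult_le_compat_l; [left; apply Rdiv_lt_0_compat; lra |].
    apply Rpower_le_antitone; lra.
  - assert (Hx : x = / INR m).
    { unfold x; replace (m - j)%nat with 1%nat by lia; simpl; field; lra. }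
    assert (0 < x) by (rewrite Hx; apply Rinv_0_lt_compat; auto).
    rewrite Rminus_0_r.
    replace (Rpower x theta) with (Rpower x (theta - 1) * Rpower x 1)
      by (rewrite <- Rpower_plus; f_equal; ring).
    rewrite Rpower_1, Rmult_comm by auto.
    apply Rmult_le_compat_l; [left; apply exp_pos |].
    rewrite Hx; unfold Rdiv.
    rewrite <- (Rmult_1_l (/ INR m)) at 2.
    apply Rmult_le_compat_r; [left; apply Rinv_0_lt_compat |]; lra.
Qed.

Lemma tail_pow_decrement_ge0 m j : 0 <= tail_pow theta m j - tail_pow theta m (S j).
Proof.
  destruct (Nat.lt_ge_cases j m) as [Hj | Hj].
  - eapply Rle_trans; [| apply tail_pow_decrement; auto].
    apply Rmult_le_pos; [| left; apply exp_pos].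
    left; apply Rdiv_lt_0_compat; [lra | apply lt_0_INR; lia].
  - unfold tail_pow; case (Nat.ltb_spec j m); case (Nat.ltb_spec (S j) m); lia || lra.
Qed.

Lemma tail_pow_bounds m j : 0 <= tail_pow theta m j <= 1.
Proof.
  unfold tail_pow; case (Nat.ltb_spec j m); intros Hj; [| lra].
  split; [left; apply exp_pos |].
  apply Rpower_le_1; [lra |]; split.
  - apply Rdiv_lt_0_compat; apply lt_0_INR; lia.
  - assert (Hm : 0 < INR m) by (apply lt_0_INR; lia).
    apply Rmult_le_reg_r with (INR m); auto.
    unfold Rdiv; rewrite Rmult_assoc, Rinv_l, Rmult_1_l, Rmult_1_r by lra.
    apply le_INR; lia.
Qed.

Lemma lsum_tail_pow_decrement_le1 J n m :
  lsum (fun j => tail_pow theta m j - tail_pow theta m (S j)) (Jlist J n) <= 1.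
Proof.
  eapply Rle_trans; [apply lsum_filter_le; intros; apply tail_pow_decrement_ge0 |].
  rewrite lsum_telescope.
  pose proof (tail_pow_bounds m 1); pose proof (tail_pow_bounds m (1 + n)); lra.
Qed.

Lemma shift_factor_le m j : (1 <= j < m)%nat ->
  theta / INR j * Rpower (INR (m - j) / INR m) (theta - 1)
    <= 2 * (theta / INR j) + 2 * (tail_pow theta m j - tail_pow theta m (S j)).
Proof.
  intros Hj.
  assert (HJ : 0 < INR j) by (apply lt_0_INR; lia).
  assert (HM : 0 < INR m) by (apply lt_0_INR; lia).
  assert (Hmj : INR (m - j) = INR m - INR j) by (apply minus_INR; lia).
  assert (0 < theta / INR j) by (apply Rdiv_lt_0_compat; lra).
  pose proof (tail_pow_decrement_ge0 m j).
  destruct (Nat.le_gt_cases (2 * j) m) as [Hshort | Hlong].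
  - assert (Rpower (INR (m - j) / INR m) (theta - 1) <= 2); [| nra].
    apply Rle_trans with (Rpower (/ 2) (theta - 1)); [| apply Rpower_half_le_2; lra].
    apply Rpower_le_antitone; [lra |]; split; [lra |].
    apply le_INR in Hshort; rewrite mult_INR in Hshort; simpl in Hshort.
    rewrite Hmj; apply Rmult_le_reg_r with (INR m); auto.
    unfold Rdiv; rewrite Rmult_assoc, Rinv_l by lra; lra.
  - pose proof (tail_pow_decrement m j ltac:(lia)).
    assert (Hfac : 0 < Rpower (INR (m - j) / INR m) (theta - 1)) by apply exp_pos.
    assert (theta / INR j <= 2 * (theta / INR m)); [| nra].
    apply lt_INR in Hlong; rewrite mult_INR in Hlong; simpl in Hlong.
    unfold Rdiv; apply Rmult_le_reg_r with (INR j * INR m); [nra |].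
    field_simplify; nra.
Qed.

Lemma weight_step_le n r j : (1 <= j)%nat ->
  theta / INR j * weight theta n (r + j) <=
  (2 * (theta / INR j * weight theta n j)
     + 2 * (tail_pow theta (n - r) j - tail_pow theta (n - r) (S j))) * weight theta n r.
Proof.
  intros Hj.
  assert (0 < theta / INR j) by (apply Rdiv_lt_0_compat; [lra | apply lt_0_INR; lia]).
  pose proof (weight_ge0 theta n j); pose proof (weight_ge0 theta n r).
  pose proof (tail_pow_decrement_ge0 (n - r) j).
  destruct (Nat.lt_ge_cases (r + j) n) as [Hrj | Hrj].
  - rewrite weight_shift by auto; rewrite <- Rmult_assoc.
    apply Rmult_le_compat_r; auto.
    pose proof (shift_factor_le (n - r) j ltac:(lia)).
    pose proof (weight_ge1 n j ltac:(lia)); nra.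
  - rewrite weight_out by auto; rewrite Rmult_0_r; apply Rmult_le_pos; nra.
Qed.

Lemma upsilon_le_2pow J n l : (1 <= n)%nat ->
  upsilon theta J n l <= 2 ^ l * (upsilon theta J n 1 + 1) ^ l.
Proof.
  intros Hn; rewrite <- Rpow_mult_distr.
  pose proof (upsilon1_ge0 theta J n ltac:(lra)).
  apply upsilon_le_pow; auto; [lra | lra |]; intros r.
  eapply Rle_trans.
  { apply lsum_le; intros j Hj; apply Jlist_bounds in Hj; apply weight_step_le; lia. }
  rewrite (lsum_ext _ (fun j => weight theta n r * (2 * (theta / INR j * weight theta n j)
             + 2 * (tail_pow theta (n - r) j - tail_pow theta (n - r) (S j))))) by (intros; ring).
  rewrite lsumZ, lsumD, !lsumZ, <- upsilon1, Rmult_comm.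
  apply Rmult_le_compat_r; [apply weight_ge0 |].
  pose proof (lsum_tail_pow_decrement_le1 J n (n - r)); lra.
Qed.

End SmallTheta.

Theorem lemma4 (theta : R) (Htheta : 0 < theta) :
  (1 <= theta ->
     forall (J : nat -> nat -> bool) (n l : nat), (1 <= n)%nat -> (1 <= l)%nat ->
       upsilon theta J n l <= (upsilon theta J n 1) ^ l) /\
  (theta < 1 ->
     exists C : R, 0 < C /\
       forall (J : nat -> nat -> bool) (n l : nat), (1 <= n)%nat -> (1 <= l)%nat ->
         upsilon theta J n l <= C ^ l * (upsilon theta J n 1 + 1) ^ l).
Proof.
  split.
  - intros Hge1 J n l Hn _; apply upsilon_le_upsilon1_pow; auto.
  - intros Hlt1; exists 2; split; [lra |].
    intros J n l Hn _; apply upsilon_le_2pow; auto.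
Qed.
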